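(* Fix a context-free grammar $G=(N,\Sigma,P,S)$. Let $M=(V,E,L)$ be a finite directed edge-labeled graph with $L\subseteq\Sigma$, $E\subseteq V\times L\times V$, and no two parallel edges with the same label, and let $V_s,V_f\subseteq V$ be sets of start and final vertices. Then the worst-case space complexity of the GLL-based graph parsing algorithm (described in the context) run on $G$ and $M$ is $O(|V|^3+|E|)$, the constants depending only on $G$.
   Context: Paths and queries: a path in $M$ is a sequence of edges $(v_0,l_0,v_1),(v_1,l_1,v_2),\dots,(v_{n-1},l_{n-1},v_n)$ with $n\ge 1$; its word is $l_0l_1\cdots l_{n-1}$. The algorithm builds a representation of all paths $p$ from a vertex of $V_s$ to a vertex of $V_f$ whose word belongs to $\mathcal{L}(G)$. The GLL-based graph parsing algorithm: it is the table-driven generalized LL (GLL) parsing algorithm in which input positions are vertices of $M$ instead of indices into a string. A grammar slot is a production with a dot, $X\to\alpha\cdot\beta$. The algorithm maintains a graph-structured stack (GSS) whose nodes are labeled by pairs (grammar slot, vertex); descriptors $(L,u,i,w)$ with $L$ a grammar slot, $u$ a GSS node, $i\in V$ the current position and $w$ an SPPF node (or a dummy); a working set $R$ of descriptors to process, a set $U$ of all descriptors ever created (a descriptor is added to $R$ only if it is not already in $U$), and a set $P$ of popped (GSS node, SPPF node) pairs. Initially $R$ contains one initial descriptor for each vertex in $V_s$. Processing a descriptor at slot $X\to\alpha\cdot x\beta$ at vertex $i$: if $x$ is a terminal, then for every outgoing edge $e$ of $i$ with label $x$, the terminal SPPF node for $e$ is created/reused, combined with the current SPPF node, and a descriptor with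 slot $X\to\alpha x\cdot\beta$ and position the target of $e$ is added; if $x$ is a nonterminal, a GSS node for $(X\to\alpha x\cdot\beta, i)$ is created/reused (with an edge to the current GSS node labeled by the current SPPF node), and for every slot in the union, over outgoing edges $e$ of $i$, of the LL parse-table entries for $x$ and the label of $e$, a descriptor at position $i$ is added; at a slot $X\to\alpha\cdot$ the standard GLL pop operation is performed. All other operations (add, pop, create, SPPF node construction) are those of standard GLL. The algorithm terminates when $R$ is empty. The output is a binarized Shared Packed Parse Forest (SPPF) with terminal nodes $(v_0,T,v_1)$ for edges $(v_0,T,v_1)\in E$, $\varepsilon$-nodes $(v,\varepsilon,v)$, nonterminal nodes $(v_0,A,v_1)$, intermediate nodes $(v_0,t,v_1)$ with $t$ a grammar slot, and packed nodes $(A\to\alpha\cdot\beta,v)$ (children of nonterminal/intermediate nodes, with at most two children), each node created at most once per label. *)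

(* Model of the GLL-based graph parsing
   algorithm as a nondeterministic transition system whose states store
   the sets R, U, P, the GSS (nodes, edges) and the SPPF (symbol nodes,
   packed nodes). *)
From Stdlib Require Import List.
From mathcomp Require Import all_boot.

Set Implicit Arguments.
Unset Strict Implicit.
Unset Printing Implicit Defensive.

Section GLL.

Variables (Nt Tm : finType).

Definition sym := (Nt + Tm)%type.   (* inl = nonterminal, inr = terminal *)

Record grammar := Grammar { prods : seq (Nt * seq sym)%type; start : Nt }.

(* grammar slot  X -> alpha . beta *)
Record slot := Slot { lhs : Nt; bef : seq sym; aft : seq sym }.

Variable G : grammar.

Inductive nullable_seq : seq sym -> Prop :=
| ns_nil : nullable_seq [::]
| ns_cons A gam bet :
    (A, gam) \in prods G -> nullable_seq gam -> nullable_seq bet ->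
    nullable_seq (inl A :: bet).

Inductive first_seq : seq sym -> Tm -> Prop :=
| fs_term a bet : first_seq (inr a :: bet) a
| fs_nt A gam bet a :
    (A, gam) \in prods G -> first_seq gam a -> first_seq (inl A :: bet) a
| fs_skip A bet a :
    nullable_seq [:: inl A] -> first_seq bet a -> first_seq (inl A :: bet) a.

Inductive follow : Nt -> Tm -> Prop :=
| fo_first B alp A bet a :
    (B, alp ++ inl A :: bet) \in prods G -> first_seq bet a -> follow A a
| fo_up B alp A bet a :
    (B, alp ++ inl A :: bet) \in prods G -> nullable_seq bet ->
    follow B a -> follow A a.

(* LL(1) parse-table entry: the slot  x -> . gam  is in the entry (x, a) *)
Definition ll_entry (x : Nt) (a : Tm) (gam : seq sym) : Prop :=
  (x, gam) \in prods G /\ (first_seq gam a \/ (nullable_seq gam /\ follow x a)).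

Variables (V : finType) (E : {set (V * Tm * V)%type}) (Vs : {set V}).

(* SPPF symbol nodes, identified by their labels *)
Inductive snode :=
| STerm of V & Tm & V
| SEps of V
| SNT of V & Nt & V
| SInt of V & slot & V.

Definition ext (n : snode) : V * V :=
  match n with
  | STerm a _ b => (a, b) | SEps v => (v, v)
  | SNT a _ b => (a, b) | SInt a _ b => (a, b) end.

(* packed node (slot, pivot) under a parent, with its (at most two) children;
   [None] as left child / SPPF node denotes the dummy node $ *)
Record packed := Packed
  { pParent : snode; pSlot : slot; pPivot : V;
    pLeft : option snode; pRight : snode }.

Inductive gss := GRoot | GNode of slot & V.

(* descriptor labels: the initial label (code for the start nonterminal S)
   or a grammar slot *)
Inductive label := LStart | LSlot of slot.

Record desc := Desc { dL : label; dU : gss; dI : V; dW : option snode }.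

(* case in which getNodeP(X -> alpha . beta, w, z) simply returns z *)
Definition gnp_skip (L : slot) : Prop :=
  aft L <> [::] /\
  ((exists a, bef L = [:: inr a]) \/
   (exists A, bef L = [:: inl A] /\ ~ nullable_seq [:: inl A])).

Definition gnp_node (L : slot) (w : option snode) (z : snode) : snode :=
  let k := (ext z).1 in
  let i := (ext z).2 in
  let j := match w with Some w' => (ext w').1 | None => k end in
  match aft L with
  | [::] => SNT j (lhs L) i
  | _ => SInt j L i
  end.

Definition gnp_packed (L : slot) (w : option snode) (z : snode) : packed :=
  Packed (gnp_node L w z) L (ext z).1 w z.

Definition gnp_res (L : slot) (w : option snode) (z : snode) (y : snode) : Prop :=
  (gnp_skip L /\ y = z) \/ (~ gnp_skip L /\ y = gnp_node L w z).

Record state := State {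
  sR  : desc -> Prop;
  sU  : desc -> Prop;
  sP  : (gss * snode)%type -> Prop;
  sGN : gss -> Prop;
  sGE : (gss * option snode * gss)%type -> Prop;     (* GSS edges (v, label w, u) *)
  sSN : snode -> Prop;
  sSP : packed -> Prop
}.

(* elementary effects of processing one descriptor *)
Inductive effect :=
| EDesc of desc
| EPop of (gss * snode)%type
| EGN of gss
| EGE of (gss * option snode * gss)%type
| ESN of snode
| ESP of packed.

Definition gnp_eff (L : slot) (w : option snode) (z : snode) (e : effect) : Prop :=
  ~ gnp_skip L /\ (e = ESN (gnp_node L w z) \/ e = ESP (gnp_packed L w z)).

(* the SPPF node z popped at slot X -> alpha . (at vertex i, current node w);
   for alpha = eps it is getNodeP(X -> ., w, (i,eps,i)) *)
Definition pop_node (X : Nt) (alp : seq sym) (i : V) (w : option snode)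
  (z : snode) : Prop :=
  (alp = [::] /\ gnp_res (Slot X [::] [::]) w (SEps i) z) \/
  (alp <> [::] /\ w = Some z).

Inductive emits (s : state) : desc -> effect -> Prop :=
| em_start u i w gam a j :
    (i, a, j) \in E -> ll_entry (start G) a gam ->
    emits s (Desc LStart u i w) (EDesc (Desc (LSlot (Slot (start G) [::] gam)) u i None))
| em_term_node X alp a bet u i w j :
    (i, a, j) \in E ->
    emits s (Desc (LSlot (Slot X alp (inr a :: bet))) u i w) (ESN (STerm i a j))
| em_term_gnp X alp a bet u i w j e :
    (i, a, j) \in E ->
    gnp_eff (Slot X (rcons alp (inr a)) bet) w (STerm i a j) e ->
    emits s (Desc (LSlot (Slot X alp (inr a :: bet))) u i w) e
| em_term_desc X alp a bet u i w j y :
    (i, a, j) \in E ->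
    gnp_res (Slot X (rcons alp (inr a)) bet) w (STerm i a j) y ->
    emits s (Desc (LSlot (Slot X alp (inr a :: bet))) u i w)
      (EDesc (Desc (LSlot (Slot X (rcons alp (inr a)) bet)) u j (Some y)))
| em_nt_gn X alp A bet u i w :
    emits s (Desc (LSlot (Slot X alp (inl A :: bet))) u i w)
      (EGN (GNode (Slot X (rcons alp (inl A)) bet) i))
| em_nt_ge X alp A bet u i w :
    emits s (Desc (LSlot (Slot X alp (inl A :: bet))) u i w)
      (EGE (GNode (Slot X (rcons alp (inl A)) bet) i, w, u))
| em_nt_pgnp X alp A bet u i w z e :
    sP s (GNode (Slot X (rcons alp (inl A)) bet) i, z) ->
    gnp_eff (Slot X (rcons alp (inl A)) bet) w z e ->
    emits s (Desc (LSlot (Slot X alp (inl A :: bet))) u i w) e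
| em_nt_pdesc X alp A bet u i w z y :
    sP s (GNode (Slot X (rcons alp (inl A)) bet) i, z) ->
    gnp_res (Slot X (rcons alp (inl A)) bet) w z y ->
    emits s (Desc (LSlot (Slot X alp (inl A :: bet))) u i w)
      (EDesc (Desc (LSlot (Slot X (rcons alp (inl A)) bet)) u (ext z).2 (Some y)))
| em_nt_call X alp A bet u i w gam a j :
    (i, a, j) \in E -> ll_entry A a gam ->
    emits s (Desc (LSlot (Slot X alp (inl A :: bet))) u i w)
      (EDesc (Desc (LSlot (Slot A [::] gam))
                   (GNode (Slot X (rcons alp (inl A)) bet) i) i None))
| em_eps_node X u i w :
    emits s (Desc (LSlot (Slot X [::] [::])) u i w) (ESN (SEps i))
| em_eps_gnp X u i w e :
    gnp_eff (Slot X [::] [::]) w (SEps i) e ->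
    emits s (Desc (LSlot (Slot X [::] [::])) u i w) e
| em_pop_P X alp Lu j i w z :
    pop_node X alp i w z ->
    emits s (Desc (LSlot (Slot X alp [::])) (GNode Lu j) i w) (EPop (GNode Lu j, z))
| em_pop_gnp X alp Lu j i w z w' v e :
    pop_node X alp i w z ->
    sGE s (GNode Lu j, w', v) ->
    gnp_eff Lu w' z e ->
    emits s (Desc (LSlot (Slot X alp [::])) (GNode Lu j) i w) e
| em_pop_desc X alp Lu j i w z w' v y :
    pop_node X alp i w z ->
    sGE s (GNode Lu j, w', v) ->
    gnp_res Lu w' z y ->
    emits s (Desc (LSlot (Slot X alp [::])) (GNode Lu j) i w)
      (EDesc (Desc (LSlot Lu) v i (Some y))).

Definition process (s : state) (d : desc) : state :=
  State
    (fun x => (sR s x /\ x <> d) \/ (emits s d (EDesc x) /\ ~ sU s x))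
    (fun x => sU s x \/ emits s d (EDesc x))
    (fun x => sP s x \/ emits s d (EPop x))
    (fun x => sGN s x \/ emits s d (EGN x))
    (fun x => sGE s x \/ emits s d (EGE x))
    (fun x => sSN s x \/ emits s d (ESN x))
    (fun x => sSP s x \/ emits s d (ESP x)).

Definition init_state : state :=
  State
    (fun d => exists2 v, v \in Vs & d = Desc LStart GRoot v None)
    (fun d => exists2 v, v \in Vs & d = Desc LStart GRoot v None)
    (fun _ => False)
    (fun u => u = GRoot)
    (fun _ => False)
    (fun _ => False)
    (fun _ => False).

Definition step (s s' : state) : Prop := exists2 d, sR s d & s' = process s d.

Inductive reachable : state -> Prop :=
| reach_init : reachable init_state
| reach_step s s' : reachable s -> step s s' -> reachable s'.

(* the memory cells (each of size O(1), constants depending on G) *)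
Inductive cell :=
| CR of desc | CU of desc | CP of (gss * snode)%type | CGN of gss
| CGE of (gss * option snode * gss)%type | CSN of snode | CSP of packed.

Definition cells (s : state) (c : cell) : Prop :=
  match c with
  | CR d => sR s d | CU d => sU s d | CP p => sP s p | CGN u => sGN s u
  | CGE e => sGE s e | CSN n => sSN s n | CSP p => sSP s p
  end.

Definition card_le (T : Type) (A : T -> Prop) (n : nat) : Prop :=
  forall l : list T, NoDup l -> (forall x, In x l -> A x) -> (size l <= n)%N.

Definition space_le (s : state) (n : nat) : Prop := card_le (cells s) n.

End GLL.

(** The cells of a reachable state are governed by an invariant saying that
    every slot occurring in them is a slot of G, that a descriptor's SPPF node
    ends at the descriptor's vertex and starts at the level of its GSS node,
    and that a packed node's left child ends where its right child starts.
    Under this invariant each cell is determined by a bounded amount of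
    grammar data together with at most three vertices, so a reachable state
    has at most c_G (|V| + 1)^3 cells. *)
From Stdlib Require List.
From mathcomp Require Import all_boot zify.

Set Implicit Arguments.
Unset Strict Implicit.
Unset Printing Implicit Defensive.

Arguments GRoot {Nt Tm V}.
Arguments LStart {Nt Tm}.
Arguments SEps {Nt Tm V}.
Arguments STerm {Nt Tm V}.
Arguments SNT {Nt Tm V}.
Arguments SInt {Nt Tm V}.

Lemma mem_In (T : eqType) (x : T) (s : seq T) : x \in s -> List.In x s.
Proof.
by elim: s => //= y s IHs; rewrite in_cons => /predU1P [->|/IHs]; auto.
Qed.

Lemma card_le_image (T : Type) (F : finType) (f : F -> T) (A : T -> Prop) :
  (forall t, A t -> exists x, t = f x) -> card_le A #|F|.
Proof.
move=> A_image l uniq_l l_A.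
have l_sub : List.incl l (map f (enum F)).
  move=> t /l_A /A_image [x ->]; apply: List.in_map; exact/mem_In/mem_enum.
have /leP : (size l <= size (map f (enum F)))%coq_nat.
  exact: List.NoDup_incl_length uniq_l l_sub.
by rewrite size_map -cardE.
Qed.

Lemma card_prod_le_cube (X Y : finType) (B : nat) :
  0 < B -> #|X| <= B -> #|Y| <= B -> #|{: X * Y}| <= B ^ 3.
Proof.
move=> B_gt0 leX leY; rewrite card_prod (leq_trans (leq_mul leX leY)) //.
by rewrite !expnS expn0 muln1 mulnA leq_pmulr.
Qed.

Lemma card_prod3_le_cube (X Y Z : finType) (B : nat) :
  #|X| <= B -> #|Y| <= B -> #|Z| <= B -> #|{: X * Y * Z}| <= B ^ 3.
Proof.
move=> leX leY leZ; rewrite !card_prod !expnS expn0 muln1 mulnA.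
exact: leq_mul (leq_mul _ _) _.
Qed.

Lemma succ_cube_le (n : nat) : n.+1 ^ 3 <= 4 * (n ^ 3 + 1).
Proof.
(* 4 (n^3 + 1) - (n + 1)^3 = 3 (n - 1)^2 (n + 1) *)
have square_ge : n + n <= n * n + 1 by nia.
rewrite !expnS expn0 !muln1; nia.
Qed.

Section GrammarSlots.

Variables (Nt Tm : finType) (G : grammar Nt Tm).

Definition valid_slot (L : slot Nt Tm) : bool :=
  (lhs L, bef L ++ aft L) \in prods G.

Lemma valid_slot_rcons X alp x bet :
  valid_slot (Slot X (rcons alp x) bet) = valid_slot (Slot X alp (x :: bet)).
Proof. by rewrite /valid_slot /= cat_rcons. Qed.

Lemma gnp_skip_rcons X alp x bet :
  gnp_skip G (Slot X (rcons alp x) bet) -> alp = [::].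
Proof. by case: alp => // y [|? ?] [_ [[? []]|[? [[]]]]]. Qed.

(* A slot is coded by the index of its production and the dot position. *)
Definition dot_bound : nat := (\max_(r <- prods G) size r.2).+1.

Definition slot_code : finType := ('I_(size (prods G)) * 'I_dot_bound)%type.

Definition slot_of (c : slot_code) : slot Nt Tm :=
  let: (X, rhs) := tnth (in_tuple (prods G)) c.1 in
  Slot X (take c.2 rhs) (drop c.2 rhs).

Lemma slot_ofP L : valid_slot L -> exists c, L = slot_of c.
Proof.
case: L => X alp bet; rewrite /valid_slot /= => prodL.
have dot_lt : size alp < dot_bound.
  rewrite ltnS (leq_trans _ (leq_bigmax_seq _ prodL _)) //=.
  by rewrite size_cat leq_addr.
have prod_lt : index (X, alp ++ bet) (prods G) < size (prods G).
  by rewrite index_mem.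
exists (Ordinal prod_lt, Ordinal dot_lt).
by rewrite /slot_of /= (tnth_nth (X, alp ++ bet)) /= nth_index // take_size_cat
  ?drop_size_cat.
Qed.

Definition node_label : finType := (Tm + Nt + slot_code + unit)%type.

End GrammarSlots.

Section Invariant.

Variables (Nt Tm : finType) (G : grammar Nt Tm) (V : finType)
  (E : {set (V * Tm * V)%type}) (Vs : {set V}).

Local Notation slot := (slot Nt Tm).
Local Notation snode := (snode Nt Tm V).
Local Notation gss := (gss Nt Tm V).
Local Notation valid_slot := (valid_slot G).

Definition wf_node (z : snode) : Prop :=
  if z is SInt _ L _ then valid_slot L else True.

(* Left extent of the current SPPF node; the dummy node starts where it ends. *)
Definition lext (w : option snode) (i : V) : V :=
  if w is Some y then (ext y).1 else i.

Definition ends_at (w : option snode) (i : V) : Prop :=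
  if w is Some y then wf_node y /\ (ext y).2 = i else True.

Definition gss_at (u : gss) (k : V) : Prop :=
  if u is GNode L j then valid_slot L /\ j = k else True.

Definition gss_inv (u : gss) : Prop :=
  if u is GNode L _ then valid_slot L else True.

Definition desc_ok (L : slot) (u : gss) (i : V) (w : option snode) : Prop :=
  [/\ valid_slot L, gss_at u (lext w i), ends_at w i
     & (bef L = [::] -> w = None)].

Definition desc_inv (d : desc Nt Tm V) : Prop :=
  if dL d is LSlot L then desc_ok L (dU d) (dI d) (dW d)
  else dU d = GRoot /\ dW d = None.

Definition pop_inv (p : gss * snode) : Prop :=
  if p.1 is GNode L j then [/\ valid_slot L, wf_node p.2 & (ext p.2).1 = j]
  else False.

Definition edge_inv (e : gss * option snode * gss) : Prop :=
  let: (u, w, v) := e in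
  if u is GNode L k then
    exists X alp A bet, L = Slot X (rcons alp (inl A)) bet /\
                        desc_ok (Slot X alp (inl A :: bet)) v k w
  else False.

Definition packed_inv (p : packed Nt Tm V) : Prop :=
  exists L w z,
    [/\ p = gnp_packed L w z, valid_slot L, wf_node z & ends_at w (ext z).1].

Definition effect_inv (e : effect Nt Tm V) : Prop :=
  match e with
  | EDesc d => desc_inv d | EPop p => pop_inv p | EGN u => gss_inv u
  | EGE x => edge_inv x | ESN z => wf_node z | ESP p => packed_inv p
  end.

Definition cell_effect (c : cell Nt Tm V) : effect Nt Tm V :=
  match c with
  | CR d | CU d => EDesc d | CP p => EPop p | CGN u => EGN u
  | CGE x => EGE x | CSN z => ESN z | CSP p => ESP p
  end.

Definition state_inv (s : state Nt Tm V) : Prop :=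
  forall c, cells s c -> effect_inv (cell_effect c).

Lemma gss_at_inv u k : gss_at u k -> gss_inv u.
Proof. by case: u => //= L j []. Qed.

Lemma ext_gnp_node L w z : ext (gnp_node L w z) = (lext w (ext z).1, (ext z).2).
Proof. by rewrite /gnp_node; case: (aft L); case: w. Qed.

Lemma ext_gnp_res L w z y :
  (gnp_skip G L -> w = None) -> gnp_res G L w z y ->
  ext y = (lext w (ext z).1, (ext z).2).
Proof.
move=> skip_dummy [[/skip_dummy -> ->]|[_ ->]]; last exact: ext_gnp_node.
by case: (ext z).
Qed.

Lemma wf_gnp_node L w z : valid_slot L -> wf_node (gnp_node L w z).
Proof. by rewrite /gnp_node; case: (aft L). Qed.

Lemma wf_gnp_res L w z y :
  valid_slot L -> wf_node z -> gnp_res G L w z y -> wf_node y.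
Proof. by move=> validL wf_z [[_ ->]|[_ ->]] //; apply: wf_gnp_node. Qed.

Lemma gnp_eff_inv L w z e :
  valid_slot L -> wf_node z -> ends_at w (ext z).1 -> gnp_eff G L w z e ->
  effect_inv e.
Proof.
move=> validL wf_z w_z [_ [->|->]] /=; first exact: wf_gnp_node.
by exists L, w, z.
Qed.

Lemma desc_ok_advance X alp x bet u w z y :
  desc_ok (Slot X alp (x :: bet)) u (ext z).1 w -> wf_node z ->
  gnp_res G (Slot X (rcons alp x) bet) w z y ->
  desc_ok (Slot X (rcons alp x) bet) u (ext z).2 (Some y).
Proof.
move=> [validL u_at w_at dummy_w] wf_z res_y.
have ext_y : ext y = (lext w (ext z).1, (ext z).2).
  by apply: ext_gnp_res res_y => /gnp_skip_rcons.
split => /=; rewrite ?ext_y ?valid_slot_rcons //.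
- by split => //; apply: wf_gnp_res res_y; rewrite ?valid_slot_rcons.
- by case: (alp).
Qed.

Lemma pop_node_ext X alp Lu j i w z :
  desc_ok (Slot X alp [::]) (GNode Lu j) i w -> pop_node G X alp i w z ->
  wf_node z /\ ext z = (j, i).
Proof.
move=> [_ [_ ->] w_at _] [[_ [[[nonempty _] _]|[_ ->]]]|[_ w_z]] //.
by move: w_at; rewrite w_z /= => -[wf_z <-]; case: (ext z).
Qed.

Lemma emits_inv s d e :
  state_inv s -> desc_inv d -> emits G E s d e -> effect_inv e.
Proof.
move=> inv_s ok_d em; case: em ok_d; rewrite /desc_inv //=.
- move=> u i w gam a j _ [prod_gam _] [u_root _].
  by rewrite /= in u_root; rewrite u_root.
- move=> X alp a bet u i w j e0 _ eff [validL _ w_at _].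
  by apply: gnp_eff_inv eff; rewrite ?valid_slot_rcons.
- by move=> X alp a bet u i w j y _ res_y ok_d; apply: desc_ok_advance res_y.
- by move=> X alp A bet u i w [validL _ _ _]; rewrite valid_slot_rcons.
- by move=> X alp A bet u i w ok_d; exists X, alp, A, bet.
- move=> X alp A bet u i w z e0 popped eff [validL _ w_at _].
  have [_ wf_z z_at] := inv_s (CP _) popped.
  by apply: gnp_eff_inv eff; rewrite ?valid_slot_rcons ?z_at.
- move=> X alp A bet u i w z y popped res_y ok_d.
  have [_ wf_z z_at] := inv_s (CP _) popped.
  by apply: desc_ok_advance res_y; rewrite ?z_at.
- move=> X alp A bet u i w gam a j _ [prod_gam _] [validL _ _ _].
  by split; rewrite //= valid_slot_rcons.
- by move=> X u i w e0 eff [validL _ w_at _]; apply: gnp_eff_inv eff.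
- move=> X alp Lu j i w z pop_z ok_d.
  have [wf_z ext_z] := pop_node_ext ok_d pop_z.
  by case: ok_d => _ [validLu _] _ _; split; rewrite ?ext_z.
- move=> X alp Lu j i w z w' v e0 pop_z edge eff ok_d.
  have [wf_z ext_z] := pop_node_ext ok_d pop_z.
  have [X' [alp' [A [bet' [Lu_def [valid' _ w'_at _]]]]]] := inv_s (CGE _) edge.
  by apply: gnp_eff_inv eff; rewrite ?Lu_def ?valid_slot_rcons ?ext_z.
- move=> X alp Lu j i w z w' v y pop_z edge res_y ok_d.
  have [wf_z ext_z] := pop_node_ext ok_d pop_z.
  have [X' [alp' [A [bet' [Lu_def ok_edge]]]]] := inv_s (CGE _) edge.
  rewrite Lu_def in res_y *.
  by have := desc_ok_advance _ wf_z res_y; rewrite ext_z; apply.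
Qed.

Lemma cells_process s d c :
  cells (process G E s d) c -> cells s c \/ emits G E s d (cell_effect c).
Proof. by case: c => x /=; tauto. Qed.

Lemma state_inv_reachable s : reachable G E Vs s -> state_inv s.
Proof.
elim=> [|{}s _ _ inv_s [d R_d ->]].
  by case=> x //= => [[v _ ->]|[v _ ->]|->].
move=> c /cells_process [/inv_s //|]; apply: emits_inv inv_s (inv_s (CR d) R_d).
Qed.

End Invariant.

Section Coding.

Variables (Nt Tm : finType) (G : grammar Nt Tm) (V : finType).

Local Notation snode := (snode Nt Tm V).
Local Notation slot_code := (slot_code G).
Local Notation wf_node := (wf_node G).
Local Notation ends_at := (ends_at G).

(* The vertex [k] is ignored by epsilon nodes. *)
Definition node_of (l : node_label G) (k i : V) : snode :=
  match l with
  | inl (inl (inl a)) => STerm k a i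
  | inl (inl (inr X)) => SNT k X i
  | inl (inr c) => SInt k (slot_of c) i
  | inr _ => SEps i
  end.

Lemma node_ofP z : wf_node z -> exists l, z = node_of l (ext z).1 (ext z).2.
Proof.
case: z => [k a i|i|k X i|k L i] /=; first by exists (inl (inl (inl a))).
- by exists (inr tt).
- by exists (inl (inl (inr X))).
- by move=> /slot_ofP [c ->]; exists (inl (inr c)).
Qed.

Definition opt_node_of (i : V) (x : option (node_label G * V)) : option snode :=
  if x is Some (l, k) then Some (node_of l k i) else None.

Lemma opt_node_ofP w i : ends_at w i -> exists x, w = opt_node_of i x.
Proof.
case: w => [z [/node_ofP [l z_def] <-]|_]; last by exists None.
by exists (Some (l, (ext z).1)); rewrite /= -z_def.
Qed.

Definition gss_code : finType := option (slot_code * V).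

Definition gss_of (x : gss_code) : gss Nt Tm V :=
  if x is Some (c, j) then GNode (slot_of c) j else GRoot.

Lemma gss_ofP u : gss_inv G u -> exists x, u = gss_of x.
Proof.
case: u => [|L j]; first by exists None.
by move=> /slot_ofP [c ->]; exists (Some (c, j)).
Qed.

Definition desc_code : finType :=
  (V + slot_code * V * gss_code * option (node_label G * V))%type.

Definition desc_of (x : desc_code) : desc Nt Tm V :=
  match x with
  | inl i => Desc LStart GRoot i None
  | inr (c, i, u, w) => Desc (LSlot (slot_of c)) (gss_of u) i (opt_node_of i w)
  end.

Lemma desc_ofP d : desc_inv G d -> exists x, d = desc_of x.
Proof.
case: d => [[|L] u i w]; rewrite /desc_inv /=.
  by case=> -> ->; exists (inl i).
case=> /slot_ofP [c ->] /gss_at_inv /gss_ofP [xu ->] /opt_node_ofP [xw ->] _.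
by exists (inr (c, i, xu, xw)).
Qed.

(* A popped pair has its node starting at the level of its GSS node. *)
Definition pop_code : finType := (slot_code * V * (node_label G * V))%type.

Definition pop_of (x : pop_code) : gss Nt Tm V * snode :=
  let: (c, j, (l, i)) := x in (GNode (slot_of c) j, node_of l j i).

Lemma pop_ofP p : pop_inv G p -> exists x, p = pop_of x.
Proof.
case: p => [[|L j] z] //= [/slot_ofP [c ->] /node_ofP [l z_def] z_at].
by exists (c, j, (l, (ext z).2)); rewrite /= -z_at -z_def.
Qed.

Definition edge_code : finType :=
  (slot_code * V * option (node_label G * V) * gss_code)%type.

Definition edge_of (x : edge_code) : gss Nt Tm V * option snode * gss Nt Tm V :=
  let: (c, k, w, v) := x in (GNode (slot_of c) k, opt_node_of k w, gss_of v).

Lemma edge_ofP e : edge_inv G e -> exists x, e = edge_of x.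
Proof.
case: e => [[[|L k] w] v] //= [X [alp [A [bet [L_def [valid_L v_at w_at _]]]]]].
have /slot_ofP [c c_def] : valid_slot G L by rewrite L_def valid_slot_rcons.
have [xw ->] := opt_node_ofP w_at.
have [xv ->] := gss_ofP (gss_at_inv v_at).
by exists (c, k, xw, xv); rewrite /= c_def.
Qed.

Definition node_code : finType := (node_label G * V * V)%type.

Definition node_of_code (x : node_code) : snode :=
  let: (l, k, i) := x in node_of l k i.

Lemma node_of_codeP z : wf_node z -> exists x, z = node_of_code x.
Proof. by move=> /node_ofP [l z_def]; exists (l, (ext z).1, (ext z).2). Qed.

(* The left child of a packed node ends where its right child starts. *)
Definition packed_code : finType :=
  (slot_code * V * (node_label G * V) * option (node_label G * V))%type.

Definition packed_of (x : packed_code) : packed Nt Tm V :=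
  let: (c, k, (l, i), w) := x in
  let z := node_of l k i in gnp_packed (slot_of c) (opt_node_of (ext z).1 w) z.

Lemma packed_ofP p : packed_inv G p -> exists x, p = packed_of x.
Proof.
case=> L [w [z [-> /slot_ofP [c ->] /node_ofP [l z_def]]]].
move=> /opt_node_ofP [xw w_def].
by exists (c, (ext z).1, (l, (ext z).2), xw); rewrite /= -z_def -w_def.
Qed.

Definition cell_code : finType :=
  (desc_code + desc_code + pop_code + gss_code + edge_code + node_code
   + packed_code)%type.

Definition cell_of (x : cell_code) : cell Nt Tm V :=
  match x with
  | inl (inl (inl (inl (inl (inl d))))) => CR (desc_of d)
  | inl (inl (inl (inl (inl (inr d))))) => CU (desc_of d)
  | inl (inl (inl (inl (inr p)))) => CP (pop_of p)
  | inl (inl (inl (inr u))) => CGN (gss_of u)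
  | inl (inl (inr e)) => CGE (edge_of e)
  | inl (inr z) => CSN (node_of_code z)
  | inr p => CSP (packed_of p)
  end.

Lemma cell_ofP c : effect_inv G (cell_effect c) -> exists x, c = cell_of x.
Proof.
case: c => y /=.
- by move=> /desc_ofP [x ->]; exists (inl (inl (inl (inl (inl (inl x)))))).
- by move=> /desc_ofP [x ->]; exists (inl (inl (inl (inl (inl (inr x)))))).
- by move=> /pop_ofP [x ->]; exists (inl (inl (inl (inl (inr x))))).
- by move=> /gss_ofP [x ->]; exists (inl (inl (inl (inr x)))).
- by move=> /edge_ofP [x ->]; exists (inl (inl (inr x))).
- by move=> /node_of_codeP [x ->]; exists (inl (inr x)).
- by move=> /packed_ofP [x ->]; exists (inr x).
Qed.

End Coding.

Definition code_factor (Nt Tm : finType) (G : grammar Nt Tm) : nat :=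
  (#|slot_code G| + #|node_label G|).+1.

Lemma card_cell_code (Nt Tm : finType) (G : grammar Nt Tm) (V : finType) :
  #|cell_code G V| <= 9 * (code_factor G * #|V|.+1) ^ 3.
Proof.
set B := code_factor G * #|V|.+1.
have B_gt0 : 0 < B by rewrite muln_gt0.
have ltB_V : #|V| < B by rewrite (leq_trans (ltnSn _)) ?leq_pmull.
have ltB_SV : #|{: slot_code G * V}| < B.
  by rewrite card_prod ltn_mul // ltnS leq_addr.
have ltB_LV : #|{: node_label G * V}| < B.
  by rewrite card_prod ltn_mul // ltnS leq_addl.
have leB_option (X : finType) : #|X| < B -> #|{: option X}| <= B.
  by rewrite card_option.
have B_cube : B <= B ^ 3 by rewrite -{1}(expn1 B) leq_pexp2l.
have -> : #|cell_code G V| = #|desc_code G V| + #|desc_code G V|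
    + #|pop_code G V| + #|gss_code G V| + #|edge_code G V| + #|node_code G V|
    + #|packed_code G V| by rewrite !card_sum.
have le_desc : #|desc_code G V| <= B + B ^ 3.
  rewrite card_sum leq_add ?(ltnW ltB_V) //.
  exact: card_prod3_le_cube (ltnW ltB_SV) (leB_option _ ltB_SV)
    (leB_option _ ltB_LV).
have le_pop : #|pop_code G V| <= B ^ 3 :=
  card_prod_le_cube B_gt0 (ltnW ltB_SV) (ltnW ltB_LV).
have le_gss : #|gss_code G V| <= B := leB_option _ ltB_SV.
have le_edge : #|edge_code G V| <= B ^ 3 :=
  card_prod3_le_cube (ltnW ltB_SV) (leB_option _ ltB_LV) (leB_option _ ltB_SV).
have le_node : #|node_code G V| <= B ^ 3 :=
  card_prod_le_cube B_gt0 (ltnW ltB_LV) (ltnW ltB_V).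
have le_packed : #|packed_code G V| <= B ^ 3 :=
  card_prod3_le_cube (ltnW ltB_SV) (ltnW ltB_LV) (leB_option _ ltB_LV).
lia.
Qed.

Theorem theorem3 (Nt Tm : finType) (G : grammar Nt Tm) :
  exists C : nat,
    forall (V : finType) (E : {set (V * Tm * V)%type}) (Vs Vf : {set V})
           (s : state Nt Tm V),
      reachable G E Vs s ->
      space_le s (C * (#|V| ^ 3 + #|E| + 1)).
Proof.
exists (36 * code_factor G ^ 3) => V E Vs Vf s reach_s.
have inv_s := state_inv_reachable reach_s.
have card_cells : space_le s #|cell_code G V|.
  by apply: (card_le_image (f := @cell_of _ _ G V)) => c /inv_s /cell_ofP.
move=> l uniq_l l_cells; apply: leq_trans (card_cells l uniq_l l_cells) _.
apply: leq_trans (card_cell_code G V) _.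
rewrite expnMn; have := succ_cube_le #|V|; nia.
Qed.
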